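(* Let $k\ge 1$ and $r\ge 0$ be integers. If a partition of the vertex set of $G_k$ into two sides has a biadjacency matrix of rank at most $r$ (over $\mathbb{Z}_2$), then the partition has at most $4r+1$ blocks.
   Context: $G_k$ is the following graph on vertices $v_1,\dots,v_{3^k}$ (ordered left to right along the boundary line of its drawing). It is defined by a drawing in the closed upper half-plane. The $3^k$ vertices lie on the horizontal boundary line and consecutive vertices are joined by a track along the line; vertices in odd positions are blue, in even positions yellow, and yellow vertices have no other tracks. The remaining tracks lie in levels $0,\dots,k-1$ (horizontal slabs, bottom to top). The bottom line of level $i$ carries points $p_{i,j}$, $0\le j<3^{k-i}/2$, left to right (the blue vertices for $i=0$, junctions for $i>0$), where tracks enter with vertical tangent. In level $i$, consecutive $p_{i,j},p_{i,j+1}$ are joined by a semicircle, subdivided by two junctions into three arcs when $j$ is a multiple of three (except that the single top-level semicircle joining $p_{k-1,0},p_{k-1,1}$ is not subdivided), a single track otherwise. For $i<k-1$ and each subdivided semicircle joining $p_{i,j},p_{i,j+1}$, tracks connect its two subdivision junctions to $p_{i+1,j/3}$, oriented so that each one connects $p_{i+1,j/3}$ downward by a smooth curve through the semicircle to $p_{i,j}$ and $p_{i,j+1}$. At every junction all incident tracks share a tangent. Two vertices of $G_k$ are adjacent iff some smooth curve contained in the union of the tracks (passing through junctions smoothly) connects them. (In particular each yellow vertex is adjacent exactly to its two neighbors in the order.) The biadjacency matrix of a partition $(A,B)$ of the vertices is the $0/1$ matrix over $\mathbb{Z}_2$ with rows indexed by $A$, columns by $B$, entry $1$ iff the two vertices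 are adjacent. A block of a partition of the vertices of $G_k$ into two sides is a maximal contiguous subsequence of $v_1,\dots,v_{3^k}$ all of whose vertices belong to the same side. *)

From mathcomp Require Import all_boot all_order all_algebra.
Set Implicit Arguments. Unset Strict Implicit. Unset Printing Implicit Defensive.

(* Vertices of G_k: 'I_(3^k); the 0-based position u stands for v_(u+1).
   Blue vertices are those at even 0-based positions (odd positions v_1, v_3, ...);
   the blue vertex at 0-based position 2j is the point p_(0,j). *)

(* desc i j b : the blue vertex p_(0,b) is reached by a smooth curve descending
   from the point p_(i,j) (through the two subdivision junctions of the
   semicircle joining p_(i-1,3j), p_(i-1,3j+1)). *)
Fixpoint desc (i j b : nat) : bool :=
  match i with
  | 0 => b == j
  | i'.+1 => desc i' (3 * j) b || desc i' (3 * j).+1 b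
  end.

(* Blue vertices p_(0,b), p_(0,c) are joined by a smooth curve: ascend from one,
   run along a semicircle joining p_(i,j), p_(i,j+1) in some level i < k
   (both points exist: 2(j+1) < 3^(k-i)), and descend to the other. *)
Definition blue_adj (k b c : nat) : bool :=
  [exists i : 'I_k, exists j : 'I_(3 ^ k),
     ((j.+1).*2 < 3 ^ (k - i)) &&
     ((desc i j b && desc i j.+1 c) || (desc i j c && desc i j.+1 b))].

Definition Gk_adj (k : nat) (u v : 'I_(3 ^ k)) : bool :=
  [|| u.+1 == v :> nat, v.+1 == u :> nat
    | [&& ~~ odd u, ~~ odd v & blue_adj k u./2 v./2]].

Definition biadj (k : nat) (A : {set 'I_(3 ^ k)}) : 'M['F_2]_(#|A|, #|~: A|) :=
  \matrix_(i < #|A|, j < #|~: A|)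
     ((Gk_adj (enum_val i) (enum_val j))%:R)%R.

Definition blocks (n : nat) (A : {set 'I_n}) : {set 'I_n * 'I_n} :=
  [set ab : 'I_n * 'I_n |
    [&& ab.1 <= ab.2,
        [forall x : 'I_n, (ab.1 <= x <= ab.2) ==> ((x \in A) == (ab.1 \in A))],
        (ab.1 == 0 :> nat) ||
          [exists x : 'I_n, (x.+1 == ab.1 :> nat) && ((x \in A) != (ab.1 \in A))]
      & (ab.2.+1 == n) ||
          [exists x : 'I_n, (x == ab.2.+1 :> nat) && ((x \in A) != (ab.2 \in A))]]].

From mathcomp Require Import all_boot all_order all_algebra.
From mathcomp Require Import zify.
Set Implicit Arguments. Unset Strict Implicit. Unset Printing Implicit Defensive.
Import Order.TTheory GRing.Theory.

(* Only the boundary path matters, together with the fact that a yellow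
   vertex is adjacent to nothing but its two neighbours.  Every block but the
   first starts at a position a > 0 whose predecessor a - 1 lies on the other
   side.  Split these positions into four classes by the parity of a and the
   side of a.  Within a class a_1 < ... < a_p, the positions a_i - 1 and a_j
   (i < j) have different parities and are at distance at least 3, so they are
   not adjacent; hence the edges {a_i - 1, a_i} give a triangular p x p minor
   of the biadjacency matrix with unit diagonal, and p is at most its rank. *)

Section TriangularMinor.

Variables (F : fieldType) (m n : nat) (M : 'M[F]_(m, n)).

Lemma mxrank_mxsub p q (f : 'I_p -> 'I_m) (g : 'I_q -> 'I_n) :
  \rank (mxsub f g M) <= \rank M.
Proof.
rewrite mxsubrc rowsubE; apply: leq_trans (mxrankM_maxr _ _) _.
by rewrite -[M]mulmx1 -mulmx_colsub mulmx1 mxrankM_maxl.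
Qed.

Lemma mxrank_ge_trig_minor p (f : 'I_p -> 'I_m) (g : 'I_p -> 'I_n) :
  (forall i, M (f i) (g i) != 0%R) ->
  (forall i j : 'I_p, i < j -> M (f i) (g j) = 0%R) ->
  p <= \rank M.
Proof.
move=> diag_neq0 trig; apply: leq_trans (mxrank_mxsub f g).
have trig_minor : is_trig_mx (mxsub f g M).
  by apply/is_trig_mxP => i j /trig; rewrite mxE.
rewrite mxrank_unit // unitmxE unitfE det_trig //.
by apply/prodf_neq0 => i _; rewrite mxE.
Qed.

End TriangularMinor.

Lemma Gk_adj_consecutive k (u v : 'I_(3 ^ k)) :
  (u.+1 == v :> nat) || (v.+1 == u :> nat) -> Gk_adj u v.
Proof. by rewrite /Gk_adj => /orP [] ->; rewrite ?orbT. Qed.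

Lemma Gk_nonadj_mixed_parity k (u v : 'I_(3 ^ k)) :
  u.+1 != v :> nat -> v.+1 != u :> nat -> odd u != odd v -> ~~ Gk_adj u v.
Proof.
rewrite /Gk_adj => /negbTE -> /negbTE -> /=.
by case: (odd u) (odd v) => [] [].
Qed.

Lemma rank_biadj_ge_triangular k (A : {set 'I_(3 ^ k)}) p
    (x y : 'I_p -> 'I_(3 ^ k)) :
  (forall i, x i \in A) -> (forall i, y i \notin A) ->
  (forall i, Gk_adj (x i) (y i)) ->
  (forall i j : 'I_p, i < j -> ~~ Gk_adj (x i) (y j)) ->
  p <= \rank (biadj A).
Proof.
move=> xA yA adj_diag nonadj.
have yAC i : y i \in ~: A by rewrite inE yA.
pose f i := enum_rank_in (xA i) (x i).
pose g i := enum_rank_in (yAC i) (y i).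
have biadjE i j : biadj A (f i) (g j) = ((Gk_adj (x i) (y j))%:R)%R.
  by rewrite mxE !enum_rankK_in.
apply: (mxrank_ge_trig_minor (f := f) (g := g)) => [i | i j ij].
  by rewrite biadjE adj_diag oner_neq0.
by rewrite biadjE (negbTE (nonadj i j ij)).
Qed.

Definition ord_prev n (a : 'I_n) : 'I_n :=
  Ordinal (leq_ltn_trans (leq_pred a) (ltn_ord a)).

Definition side_changes n (A : {set 'I_n}) : {set 'I_n} :=
  [set a : 'I_n | (0 < a) && ((ord_prev a \in A) != (a \in A))].

Lemma blocks_fst_inj n (A : {set 'I_n}) :
  {in blocks A &, injective (@fst 'I_n 'I_n)}.
Proof.
suff blocks_end_le a b b' : (a, b) \in blocks A -> (a, b') \in blocks A -> b <= b'.
  move=> [a b] [a' b'] /= ab ab' eq_a; subst a'.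
  by congr pair; apply/val_inj/eqP; rewrite eqn_leq !(blocks_end_le a).
rewrite !inE /= => /and4P [ab /forallP same _ _] /and4P [ab' _ _ end_b'].
rewrite leqNgt; apply/negP => b'b.
case/orP: end_b' => [/eqP b'n | /existsP [x /andP [/eqP xb' changes]]].
  by move: (ltn_ord b); lia.
have := same x; rewrite xb' b'b (leq_trans ab' (leqnSn _)) /= => /eqP xa.
have := same b'; rewrite ab' (ltnW b'b) /= => /eqP ba.
by rewrite xa ba eqxx in changes.
Qed.

Lemma card_blocks_le n (A : {set 'I_n}) : #|blocks A| <= #|side_changes A|.+1.
Proof.
rewrite -(card_in_imset (@blocks_fst_inj n A)).
have starts_sub : (@fst 'I_n 'I_n) @: blocks A \subset
                  [set a : 'I_n | a == 0 :> nat] :|: side_changes A.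
  apply/subsetP => _ /imsetP [[a b] + ->]; rewrite !inE /= => /and4P [_ _ + _].
  case/orP => [-> // | /existsP [x /andP [/eqP xa changes]]].
  have <- : x = ord_prev a by apply/val_inj; rewrite /= -xa.
  by rewrite -xa changes orbT.
apply: leq_trans (subset_leq_card starts_sub) _.
apply: leq_trans (leq_card_setU _ _) _; rewrite -add1n leq_add2r.
apply/card_le1P => x; rewrite inE => /eqP x0 y; rewrite !inE.
by apply/eqP/eqP => [y0 | ->]; first apply/val_inj; rewrite /= ?x0 ?y0.
Qed.

Lemma rank_biadj_ge_side_changes k (A : {set 'I_(3 ^ k)}) p
    (e : 'I_p -> 'I_(3 ^ k)) (par s : bool) :
  {homo e : i j / i < j} -> (forall i, e i \in side_changes A) ->
  (forall i, odd (e i) = par) -> (forall i, (e i \in A) = s) ->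
  p <= \rank (biadj A).
Proof.
move=> e_incr e_changes e_odd e_side.
have e_pos i : 0 < e i by move: (e_changes i); rewrite inE => /andP [].
have prev_side i : (ord_prev (e i) \in A) = ~~ s.
  move: (e_changes i); rewrite inE e_side => /andP [_].
  by case: (_ \in A); case: (s).
have prev_succ i : (ord_prev (e i)).+1 = e i by rewrite /= prednK.
have prev_odd i : odd (ord_prev (e i)) = ~~ par.
  by rewrite -(e_odd i) -(prev_succ i) /= negbK.
have prev_nonadj (i j : 'I_p) : i < j ->
    ~~ Gk_adj (ord_prev (e i)) (e j) && ~~ Gk_adj (e j) (ord_prev (e i)).
  move=> /e_incr ij; have par_ne : odd (ord_prev (e i)) != odd (e j).
    by rewrite prev_odd e_odd; case: (par).
  have ne1 : (ord_prev (e i)).+1 != e j :> nat by rewrite prev_succ neq_ltn ij.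
  have ne2 : (e j).+1 != ord_prev (e i) :> nat by rewrite /=; lia.
  by rewrite !Gk_nonadj_mixed_parity // eq_sym.
case: s e_side prev_side => e_side prev_side.
(* Here the rows are the e i, so the zeros of the minor lie below the
   diagonal; reversing the order moves them above it. *)
- apply: (@rank_biadj_ge_triangular k A p
           (fun i => e (rev_ord i)) (fun i => ord_prev (e (rev_ord i)))).
  + by move=> i; rewrite /= e_side.
  + by move=> i; rewrite /= prev_side.
  + by move=> i; apply: Gk_adj_consecutive; rewrite /= prev_succ eqxx orbT.
  + move=> i j ij; have /prev_nonadj /andP [_ //] : rev_ord j < rev_ord i.
    by rewrite /=; move: (ltn_ord j); lia.
- apply: (@rank_biadj_ge_triangular k A p (fun i => ord_prev (e i)) e).
  + by move=> i; rewrite /= prev_side.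
  + by move=> i; rewrite e_side.
  + by move=> i; apply: Gk_adj_consecutive; rewrite /= prev_succ eqxx.
  + by move=> i j /prev_nonadj /andP [].
Qed.

Lemma card_side_changes_class_le k (A : {set 'I_(3 ^ k)}) (par s : bool) :
  #|[set a in side_changes A | (odd a == par) && ((a \in A) == s)]|
    <= \rank (biadj A).
Proof.
set C := [set a in _ | _].
pose e := @Order.enum_val _ _ C.
have e_incr : {homo e : i j / i < j}.
  move=> i j.
  have := leW_mono (@Order.le_enum_val _ _ (@le_total _ 'I_(3 ^ k)) C) i j.
  by rewrite !ltEord => ->.
have e_class i : [&& e i \in side_changes A, odd (e i) == par & (e i \in A) == s].
  by move: (Order.enum_valP i); rewrite inE.
apply: (rank_biadj_ge_side_changes (e := e) (par := par) (s := s) e_incr).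
- by move=> i; case/and3P: (e_class i).
- by move=> i; case/and3P: (e_class i) => _ /eqP.
- by move=> i; case/and3P: (e_class i) => _ _ /eqP.
Qed.

Lemma card_side_changes_le k (A : {set 'I_(3 ^ k)}) :
  #|side_changes A| <= 4 * \rank (biadj A).
Proof.
pose C par s := [set a in side_changes A | (odd a == par) && ((a \in A) == s)].
have cover : side_changes A \subset
             (C false false :|: C false true) :|: (C true false :|: C true true).
  apply/subsetP => a; rewrite !inE => ->.
  by case: (odd a); case: (a \in A).
apply: leq_trans (subset_leq_card cover) _.
set r := \rank (biadj A); have -> : 4 * r = (r + r) + (r + r) by lia.
apply: leq_trans (leq_card_setU _ _) (leq_add _ _);
  apply: leq_trans (leq_card_setU _ _) (leq_add _ _);
  exact: card_side_changes_class_le.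
Qed.

Theorem lemma12 (k r : nat) (A : {set 'I_(3 ^ k)}) :
  1 <= k -> \rank (biadj A) <= r -> #|blocks A| <= 4 * r + 1.
Proof.
(* The bound holds for k = 0 as well. *)
move=> _ rank_le.
apply: leq_trans (card_blocks_le A) _.
rewrite addn1 ltnS (leq_trans (card_side_changes_le A)) //.
by rewrite leq_mul2l rank_le orbT.
Qed.
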